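(* Let $1<p,q<\infty$, and let $\mu,\nu,K$ be locally integrable functions on $\mathbb{R}^n$ such that, for some $\alpha\ge0$, $\beta\ge0$, $\rho\ge0$ and $C_0>0$, for all $\lambda\ge1$ and $t>0$, $$\mu^*(\lambda t)\le C_0\frac{\mu^*(t)}{\lambda^\alpha},\qquad \nu^*(\lambda t)\le C_0\frac{\nu^*(t)}{\lambda^\beta},\qquad K^*(\lambda t)\le C_0\frac{K^*(t)}{\lambda^\rho},$$ and $$\rho+\alpha+\tfrac1p\ge1,\qquad \rho+\beta+\tfrac1{q'}\ge1 .$$ If $$\mathcal{D}:=\sup_{t>0}\frac1{t^{2+1/p-1/q}}\int_0^t\mu^*(s)\,ds\int_0^t\nu^*(s)\,ds\int_0^tK^*(s)\,ds<\infty,$$ then $$\sup_{\xi>0,\ \eta>0}\frac1{\eta^{1/q'}}\frac1{\xi^{1/p}}\int_0^\eta\nu^*(t)\int_0^\xi\mu^*(s)\,K^{**}(\max(s,t))\,ds\,dt\le C\mathcal{D},$$ where $C$ depends only on $p,q,\alpha,\beta,\rho$ (and $C_0$).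
   Context: $\psi^*$ is the decreasing rearrangement of $\psi$ and $\psi^{**}(t)=\frac1t\int_0^t\psi^*(s)\,ds$. $q'=q/(q-1)$. *)

From HB Require Import structures.
From mathcomp Require Import all_boot all_order all_algebra.
From mathcomp Require Import all_classical all_reals all_analysis.
Set Implicit Arguments. Unset Strict Implicit. Unset Printing Implicit Defensive.
Import Order.TTheory GRing.Theory Num.Theory.
Import numFieldNormedType.Exports.
Local Open Scope classical_set_scope.
Local Open Scope ring_scope.

(** R^n is represented by [n.-tuple R], with the product (Borel) sigma-algebra
    provided by mathcomp-analysis (generated by the coordinate maps). *)

(** Lebesgue measure on R^n, defined as the iterated integral of Lebesgue
    measure on R (Tonelli): lebn 0 is the Dirac mass on the unique point of
    R^0, and lebn (n+1) A = \int_R lebn n (section of A at x) dx. *)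
Fixpoint lebn {R : realType} (n : nat) : set (n.-tuple R) -> \bar R :=
  match n return set (n.-tuple R) -> \bar R with
  | 0 => fun A => if `[< A [tuple] >] then 1%E else 0%E
  | n'.+1 => fun A =>
      (\int[@lebesgue_measure R]_x lebn [set t | A (cons_tuple x t)])%E
  end.

(** Locally integrable on R^n: measurable and integrable on every cube
    [-r,r]^n (every compact set is contained in such a cube). *)
Definition locally_integrable_n {R : realType} (n : nat)
    (f : n.-tuple R -> R) : Prop :=
  measurable_fun setT f /\
  forall r : R, 0 < r ->
    (\int[@lebn R n]_(x in [set x : n.-tuple R | forall i, (`|tnth x i| <= r)%R])
        `|f x|%:E < +oo)%E.

Definition distrib_fun {R : realType} (n : nat) (f : n.-tuple R -> R) (s : R)
  : \bar R := lebn [set x | s < `|f x|].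

Definition rearr {R : realType} (n : nat) (f : n.-tuple R -> R) (t : R)
  : \bar R :=
  ereal_inf [set s%:E | s in [set s : R | 0 <= s /\ (distrib_fun f s <= t%:E)%E]].

Definition rearr_int {R : realType} (n : nat) (f : n.-tuple R -> R) (t : R)
  : \bar R :=
  (\int[@lebesgue_measure R]_(s in `]0%R, t]) rearr f s)%E.

Definition rearr2 {R : realType} (n : nat) (f : n.-tuple R -> R) (t : R)
  : \bar R := ((t^-1)%:E * rearr_int f t)%E.

Definition conj_exp {R : realType} (q : R) : R := q / (q - 1).

From HB Require Import structures.
From mathcomp Require Import all_boot all_order all_algebra.
From mathcomp Require Import all_classical all_reals all_analysis.
From mathcomp Require Import measurable_realfun.
From mathcomp.algebra_tactics Require Import ring lra.
Import Order.TTheory GRing.Theory Num.Theory.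
Import numFieldNormedType.Exports.
Local Open Scope classical_set_scope.
Local Open Scope ring_scope.

(* Write a = 1/p, b = 1/q' and f, g, k for the rearrangements of mu, nu, K, so that the
   hypothesis reads F(r) G(r) H(r) <= r^(1+a+b) D for the primitives F, G, H of f, g, k.
   Integrating the decay of k shows that k** decays with every exponent sg < 1, sg <= rho;
   choosing sg = min(rho, 1 - a), the remaining exponent 1 - a - sg lies in [0, alpha]
   (likewise for b and beta), so the decays of f (or g) and k** together gain exactly the
   power needed.  This yields the pointwise bound
     g(t) \int_0^xi f(s) k**(max(s, t)) ds <= C xi^a t^(b-1) D:
   for t >= xi by comparing every factor with its value at xi, and for t < xi by splitting
   the s-integral at t and comparing the part over [t, xi] with the values at t.
   Integrating t^(b-1) over ]0, eta] then gives the factor eta^b / b. *)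

Section rearrangement_estimate.
Set Implicit Arguments.
Unset Strict Implicit.
Context {R : realType}.
Local Notation leb := (@lebesgue_measure R).

Lemma powRD_gt0 (x r s : R) : 0 < x -> x `^ (r + s) = x `^ r * x `^ s.
Proof. by move=> x0; rewrite powRD // (gt_eqF x0) implybT. Qed.

Lemma powR_div (x y r : R) : 0 < x -> 0 < y -> (x / y) `^ r = x `^ r * y `^ (- r).
Proof.
move=> x0 y0; rewrite powRM ?invr_ge0 ?ltW //; congr (_ * _).
by rewrite /powR invr_eq0 gt_eqF // lnV ?posrE // mulrN mulNr.
Qed.

Lemma ler_powR_interp (t s r : R) : 0 < t -> t <= s -> 0 <= r -> r <= 1 ->
  t <= t `^ r * s `^ (1 - r).
Proof.
move=> t0 ts r0 r1.
have tE : t `^ r * t `^ (1 - r) = t.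
  by rewrite -powRD_gt0 // addrC subrK powRr1 // ltW.
rewrite -[X in X <= _]tE; apply: ler_wpM2l; first exact: powR_ge0.
apply: ge0_ler_powR => //; rewrite ?nnegrE ?subr_ge0 //; first exact: ltW.
exact: le_trans (ltW t0) ts.
Qed.

Lemma measurable_powRE (c : R) : measurable_fun setT (fun u : R => (u `^ c)%:E).
Proof. by apply/measurable_EFinP; exact: measurable_powR. Qed.

Lemma integral_powR_oc (c x y : R) : 0 < c -> 0 < x -> x < y ->
  (\int[leb]_(u in `]x, y]) (u `^ (c - 1))%:E = ((y `^ c - x `^ c) / c)%:E)%E.
Proof.
move=> c0 x0 xy.
rewrite integral_itv_obnd_cbnd; last exact: measurable_funTS (measurable_powRE _).
have dF (u : R) : 0 < u -> is_derive u 1 (fun u => c^-1 * u `^ c) (c^-1 * (c * u `^ (c - 1))).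
  by move=> u0; exact: is_deriveZ (is_derive1_powR c u0).
have cF (u : R) : 0 < u -> {for u, continuous (fun u : R => c^-1 * u `^ c)}.
  by move=> u0; apply/differentiable_continuous; rewrite -derivable1_diffP; case: (dF u u0).
rewrite (@continuous_FTC2 _ _ (fun u => c^-1 * u `^ c)) //.
- by rewrite -EFinB -mulrBr mulrC.
- apply: continuous_in_subspaceT => u; rewrite inE /= in_itv /= => /andP[xu _].
  apply/differentiable_continuous; rewrite -derivable1_diffP.
  by apply: derivable_powR; rewrite in_itv /= andbT (lt_le_trans x0).
- split.
  + by move=> u; rewrite in_itv /= => /andP[xu _]; case: (dF u (lt_trans x0 xu)).
  + exact/cvg_at_right_filter/cF.
  + exact/cvg_at_left_filter/cF/(lt_trans x0 xy).
- move=> u; rewrite in_itv /= => /andP[xu _].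
  rewrite derive1E (@derive_val _ _ _ _ _ _ _ (dF u _)); last exact: lt_trans xu.
  by rewrite mulrA mulVf ?mul1r // gt_eqF.
Qed.

(* [u ^ (c - 1)] may blow up at 0, so the integral over ]0, y] is obtained by
   monotone convergence from the integrals over ]y/(n+2), y]. *)
Lemma integral_powR_0c (c y : R) : 0 < c -> 0 < y ->
  (\int[leb]_(u in `]0%R, y]) (u `^ (c - 1))%:E <= (y `^ c / c)%:E)%E.
Proof.
move=> c0 y0.
pose F n := `]y / n.+2%:R, y]%classic.
have FU : \bigcup_n F n = `]0%R, y]%classic.
  apply/seteqP; split => u.
    move=> [n _]; rewrite /F /= !in_itv /= => /andP[h ->]; rewrite andbT.
    by apply: le_lt_trans h; rewrite divr_ge0 // ltW.
  rewrite /= in_itv /= => /andP[u0 uy].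
  have hn := archi_boundP (ltW (divr_gt0 y0 u0)).
  exists (Num.bound (y / u)) => //; rewrite /F /= in_itv /= uy andbT.
  rewrite ltr_pdivrMr ?ltr0Sn // mulrC -(@ltr_pdivrMr _ u) //.
  by apply: (lt_le_trans hn); rewrite ler_nat (leq_trans (leqnSn _) (leqnSn _)).
have ndF : nondecreasing_seq F.
  move=> m n mn; apply/subsetPset => u; rewrite /F /= !in_itv /= => /andP[h ->].
  rewrite andbT; apply: le_lt_trans h; apply: ler_pM => //; first by rewrite ltW.
  by rewrite lef_pV2 ?posrE ?ltr0Sn // ler_nat ltnS.
have cvgF : (\int[leb]_(x in F i) (x `^ (c - 1))%:E @[i --> \oo] -->
    \int[leb]_(x in \bigcup_i F i) (x `^ (c - 1))%:E)%E.
  apply: ge0_nondecreasing_set_cvg_integral => //.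
  - by move=> i; exact: measurable_itv.
  - by move=> i; exact: measurable_funTS (measurable_powRE _).
  - by move=> i x _; rewrite lee_fin powR_ge0.
rewrite -FU -(cvg_lim _ cvgF) //; apply: lime_le; first exact: cvgP cvgF.
apply: nearW => n; rewrite integral_powR_oc //; last first.
- by rewrite ltr_pdivrMr ?ltr0Sn // ltr_pMr // ltr1n.
- by rewrite divr_gt0 // ltr0Sn.
by rewrite lee_fin ler_pM2r ?invr_gt0 // lerBlDr lerDl powR_ge0.
Qed.

Lemma integral_powR_oc_le (c x y : R) : 0 < c -> 0 <= x -> 0 < y ->
  (\int[leb]_(u in `]x, y]) (u `^ (c - 1))%:E <= (y `^ c / c)%:E)%E.
Proof.
move=> c0 x0 y0; apply: le_trans _ (integral_powR_0c c0 y0).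
apply: ge0_subset_integral => //.
- exact: measurable_funTS (measurable_powRE _).
- by move=> u _; rewrite lee_fin powR_ge0.
- by move=> u; rewrite /= !in_itv /= => /andP[xu ->]; rewrite (le_lt_trans x0 xu).
Qed.

Section nonincreasing.

Lemma nonincreasing_measurable_ereal (D : set R) (h : R -> \bar R) :
  is_interval D -> (forall x y, D x -> D y -> x <= y -> (h y <= h x)%E) ->
  measurable_fun D h.
Proof.
move=> iD hD mD; apply: (measurability _ (ErealGenOInfty.measurableE R)) => //.
move=> /= _ [_ [r ->] <-]; apply: is_interval_measurable.
move=> s t [Ds hs] [Dt ht] u /andP[su ut].
have Du : D u by apply: (iD s t Ds Dt); rewrite su ut.
split => //; move: ht; rewrite /= !in_itv /= !andbT => ht.
exact: lt_le_trans ht (hD _ _ Du Dt ut).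
Qed.

Record nonincr_ge0 (h : R -> \bar R) : Prop := NonincrGe0 {
  nonincr_ge0_ge0 : forall x, (0 <= h x)%E;
  nonincr_ge0_le : forall x y, x <= y -> (h y <= h x)%E }.

Definition int0 (h : R -> \bar R) (x : R) := (\int[leb]_(s in `]0%R, x]) h s)%E.

Definition avg (h : R -> \bar R) (x : R) := ((x^-1)%:E * int0 h x)%E.

Variable h : R -> \bar R.
Hypothesis hh : nonincr_ge0 h.

Lemma nonincr_ge0_measurable (D : set R) : measurable_fun D h.
Proof.
apply: measurable_funTS; apply: nonincreasing_measurable_ereal => // x y _ _.
exact: nonincr_ge0_le.
Qed.

Lemma int0_ge0 x : (0 <= int0 h x)%E.
Proof. by apply: integral_ge0 => s _; exact: nonincr_ge0_ge0. Qed.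

Lemma avg_ge0 x : 0 < x -> (0 <= avg h x)%E.
Proof. by move=> x0; rewrite mule_ge0 ?int0_ge0 // lee_fin invr_ge0 ltW. Qed.

Lemma integral_oc_le (x y : R) : x <= y ->
  (\int[leb]_(s in `]x, y]) h s <= (y - x)%:E * h x)%E.
Proof.
move=> xy; have -> : ((y - x)%:E * h x = \int[leb]_(s in `]x, y]) (cst (h x)) s)%E.
  rewrite integral_cst // muleC; congr (_ * _)%E.
  have := lebesgue_measure_itv `]x, y]; rewrite /= lte_fin => ->.
  by case: ltgtP xy => // -> _; rewrite subrr.
apply: ge0_le_integral => //.
- by move=> s _; exact: nonincr_ge0_ge0.
- exact: nonincr_ge0_measurable.
- by move=> s; rewrite /= in_itv /= => /andP[xs _]; exact/nonincr_ge0_le/ltW.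
Qed.

Lemma le_int0 t : 0 < t -> (t%:E * h t <= int0 h t)%E.
Proof.
move=> t0; have -> : (t%:E * h t = \int[leb]_(s in `]0%R, t]) (cst (h t)) s)%E.
  rewrite integral_cst // muleC; congr (_ * _)%E.
  by have := lebesgue_measure_itv `]0%R, t]; rewrite /= lte_fin t0 oppr0 adde0 => ->.
apply: ge0_le_integral => //.
- by move=> s _; exact: nonincr_ge0_ge0 hh t.
- exact: nonincr_ge0_measurable.
- by move=> s; rewrite /= in_itv /= => /andP[_ st]; apply: nonincr_ge0_le.
Qed.

Lemma le_avg t : 0 < t -> (h t <= avg h t)%E.
Proof.
move=> t0; rewrite -[h t]mul1e -(mulVf (lt0r_neq0 t0)) EFinM -muleA.
by apply: lee_wpmul2l; [rewrite lee_fin invr_ge0 ltW | exact: le_int0].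
Qed.

Lemma int0_split x y : 0 <= x -> x <= y ->
  int0 h y = (int0 h x + \int[leb]_(s in `]x, y]) h s)%E.
Proof.
move=> x0 xy; rewrite /int0.
rewrite (@itv_bndbnd_setU _ _ (BRight 0) (BRight x) (BRight y)) ?bnd_simp //.
apply: ge0_integral_setU => //.
- exact: nonincr_ge0_measurable.
- by move=> s _; exact: nonincr_ge0_ge0.
- rewrite disj_set2E; apply/eqP/seteqP; split => // s [] /=.
  by rewrite !in_itv /= => /andP[_ sx] /andP[xs _]; move: (lt_le_trans xs sx); rewrite ltxx.
Qed.

Lemma avg_nonincr x y : 0 < x -> x <= y -> (avg h y <= avg h x)%E.
Proof.
move=> x0 xy; have y0 : 0 < y := lt_le_trans x0 xy.
have int0_le : (int0 h y <= (y / x)%:E * int0 h x)%E.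
  rewrite (int0_split (ltW x0) xy).
  apply: le_trans (leeD (lexx _) (integral_oc_le xy)) _.
  have yx0 : (0 <= (y - x)%:E)%E by rewrite lee_fin subr_ge0.
  apply: le_trans (leeD (lexx _) (lee_wpmul2l yx0 (le_avg x0))) _.
  rewrite /avg muleA -EFinM -{1}(mul1e (int0 h x)) -ge0_muleDl ?int0_ge0 //; last first.
    by rewrite lee_fin mulr_ge0 ?invr_ge0 ?subr_ge0 // ltW.
  by rewrite -EFinD mulrBl mulfV ?gt_eqF // addrC subrK.
rewrite /avg; apply: le_trans (lee_wpmul2l _ int0_le) _.
  by rewrite lee_fin invr_ge0 ltW.
by rewrite muleA -EFinM mulrA mulVf ?gt_eqF // mul1r.
Qed.

Definition decays (C0 al : R) := forall lam t : R, 1 <= lam -> 0 < t ->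
  (h (lam * t) <= (C0 / lam `^ al)%:E * h t)%E.

Lemma decays_le C0 al ga t s : decays C0 al -> 0 <= C0 -> 0 <= ga -> ga <= al ->
  0 < t -> t <= s -> (h s <= (C0 * (t / s) `^ ga)%:E * h t)%E.
Proof.
move=> dh C0_ge0 ga0 gaal t0 ts; have s0 : 0 < s := lt_le_trans t0 ts.
have st1 : 1 <= s / t by rewrite ler_pdivlMr // mul1r.
have := dh _ _ st1 t0; rewrite divfK ?lt0r_neq0 // => /le_trans; apply.
apply: lee_wpmul2r; first exact: nonincr_ge0_ge0.
have -> : (s / t) `^ al = ((t / s) `^ al)^-1.
  by rewrite -powRN !powR_div // opprK mulrC.
rewrite invrK lee_fin ler_wpM2l // ger_powR //.
by rewrite divr_gt0 //= ler_pdivrMr // mul1r.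
Qed.

Definition avg_const (C0 sg : R) := 1 + C0 / (1 - sg).

Lemma avg_const_ge0 C0 sg : 0 <= C0 -> sg < 1 -> 0 <= avg_const C0 sg.
Proof. by move=> C0_ge0 sg1; rewrite addr_ge0 // divr_ge0 // subr_ge0 ltW. Qed.

Lemma avg_decays C0 rho sg t s : decays C0 rho -> 0 <= C0 -> 0 <= sg -> sg < 1 ->
  sg <= rho -> 0 < t -> t <= s ->
  (avg h s <= (avg_const C0 sg * (t / s) `^ sg)%:E * avg h t)%E.
Proof.
move=> dh C0_ge0 sg0 sg1 sgrho t0 ts; have s0 : 0 < s := lt_le_trans t0 ts.
have sg1' : 0 < 1 - sg by rewrite subr_gt0.
set P := t `^ sg * s `^ (1 - sg).
have tail : (\int[leb]_(u in `]t, s]) h u <= (C0 / (1 - sg) * P)%:E * h t)%E.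
  apply: (@le_trans _ _ (\int[leb]_(u in `]t, s])
      ((C0 * t `^ sg)%:E * h t * (u `^ ((1 - sg) - 1))%:E))%E).
    apply: ge0_le_integral => //.
    - by move=> u _; exact: nonincr_ge0_ge0.
    - exact: nonincr_ge0_measurable.
    - by apply: measurable_funeM; exact: measurable_funTS (measurable_powRE _).
    move=> u; rewrite /= in_itv /= => /andP[tu us]; have u0 := lt_trans t0 tu.
    apply: le_trans (decays_le dh C0_ge0 sg0 sgrho t0 (ltW tu)) _.
    by rewrite muleAC -EFinM powR_div // -mulrA addrAC subrr add0r.
  rewrite ge0_integralZl //; last 3 first.
  - exact: measurable_funTS (measurable_powRE _).
  - by move=> u _; rewrite lee_fin powR_ge0.
  - by apply: mule_ge0; [rewrite lee_fin mulr_ge0 ?powR_ge0 | exact: nonincr_ge0_ge0].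
  apply: le_trans (lee_wpmul2l _ (integral_powR_oc_le sg1' (ltW t0) s0)) _.
    by apply: mule_ge0; [rewrite lee_fin mulr_ge0 ?powR_ge0 | exact: nonincr_ge0_ge0].
  rewrite muleAC -EFinM le_eqVlt; apply/predU1P; left; congr (_%:E * _)%E.
  by rewrite /P; field; rewrite lt0r_neq0.
have P_ge0 : 0 <= P by rewrite mulr_ge0 ?powR_ge0.
have int0_le : (int0 h s <= (avg_const C0 sg * P)%:E * avg h t)%E.
  rewrite (int0_split (ltW t0) ts).
  have -> : int0 h t = (t%:E * avg h t)%E.
    by rewrite /avg muleA -EFinM mulfV ?lt0r_neq0 // mul1e.
  apply: le_trans (leeD (lexx _) (le_trans tail (lee_wpmul2l _ (le_avg t0)))) _.
    by rewrite lee_fin mulr_ge0 ?divr_ge0 // ltW.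
  rewrite -ge0_muleDl ?lee_fin ?mulr_ge0 ?invr_ge0 ?powR_ge0 ?(ltW t0) ?(ltW sg1') //.
  apply: lee_wpmul2r; first exact: avg_ge0.
  rewrite lee_fin /avg_const mulrDl mul1r lerD2r.
  by apply: ler_powR_interp => //; exact: ltW.
rewrite {1}/avg; apply: le_trans (lee_wpmul2l _ int0_le) _.
  by rewrite lee_fin invr_ge0 ltW.
rewrite muleA -EFinM le_eqVlt; apply/predU1P; left; congr (_%:E * _)%E.
rewrite /P powR_div // (powRD_gt0 _ _ s0) powRr1 ?(ltW s0) //.
by field; rewrite lt0r_neq0.
Qed.

End nonincreasing.

Lemma lee_pmul_scaled (x y X Y : \bar R) (c d : R) : (0 <= x)%E -> (0 <= y)%E ->
  (x <= c%:E * X)%E -> (y <= d%:E * Y)%E -> (x * y <= (c * d)%:E * (X * Y))%E.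
Proof.
move=> x0 y0 xX yY; rewrite EFinM muleACA.
by apply: lee_pmul => //; apply: le_trans xX.
Qed.

(* [sg] is the decay exponent kept for [k**], and [1 - c - sg] the one used for the
   other factor, so that together they absorb the power [1 - c]. *)
Definition exponent_split (rho al c sg : R) :=
  [/\ 0 <= sg, sg < 1, sg <= rho, 0 <= 1 - c - sg & 1 - c - sg <= al].

Lemma exponent_split_min (rho al c : R) : 0 <= rho -> 0 <= al -> 0 < c -> c <= 1 ->
  1 <= rho + al + c -> exponent_split rho al c (Num.min rho (1 - c)).
Proof.
move=> rho0 al0 c0 c1 h; rewrite /exponent_split minEle.
by case: (leP rho (1 - c)) => hr; split; lra.
Qed.

Section inner_integral.
Variables (f g k : R -> \bar R) (C0 al be rho a b : R) (D : \bar R).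
Hypotheses (hf : nonincr_ge0 f) (hg : nonincr_ge0 g) (hk : nonincr_ge0 k).
Hypotheses (df : decays f C0 al) (dg : decays g C0 be) (dk : decays k C0 rho).
Hypotheses (C0_ge0 : 0 <= C0) (a_gt0 : 0 < a) (D_ge0 : (0 <= D)%E).
Hypothesis int0_prod_le : forall r, 0 < r ->
  (int0 f r * int0 g r * int0 k r <= (r `^ (1 + a + b))%:E * D)%E.

Definition inner (xi t : R) : \bar R :=
  (\int[leb]_(s in `]0%R, xi]) (f s * avg k (Num.max s t)))%E.

Lemma inner_integrand_nonincr t : 0 < t ->
  nonincr_ge0 (fun s => f s * avg k (Num.max s t))%E.
Proof.
move=> t0; have maxt0 s : 0 < Num.max s t by rewrite lt_max t0 orbT.
split=> [s|s s' ss'].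
- by rewrite mule_ge0 ?avg_ge0 ?nonincr_ge0_ge0.
- apply: lee_pmul; rewrite ?avg_ge0 ?nonincr_ge0_ge0 //; first exact: nonincr_ge0_le.
  by apply: avg_nonincr; rewrite ?le_max2.
Qed.

Lemma inner_ge0 xi t : 0 < t -> (0 <= inner xi t)%E.
Proof. by move=> t0; apply: int0_ge0; exact: inner_integrand_nonincr. Qed.

Lemma inner_nonincr xi t t' : 0 < t -> t <= t' -> (inner xi t' <= inner xi t)%E.
Proof.
move=> t0 tt'; have t'0 := lt_le_trans t0 tt'.
apply: ge0_le_integral => //.
- by move=> s _; exact: nonincr_ge0_ge0 (inner_integrand_nonincr t'0) s.
- by apply: nonincr_ge0_measurable; exact: inner_integrand_nonincr.
- by apply: nonincr_ge0_measurable; exact: inner_integrand_nonincr.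
move=> s _; apply: lee_wpmul2l; first exact: nonincr_ge0_ge0.
apply: avg_nonincr => //; last by rewrite le_max2.
by rewrite lt_max t0 orbT.
Qed.

Lemma g_inner_measurable (xi eta : R) :
  measurable_fun `]0%R, eta] (fun t => g t * inner xi t)%E.
Proof.
apply: nonincreasing_measurable_ereal; first exact: interval_is_interval.
move=> t t'; rewrite /= !in_itv /= => /andP[t0 _] _ tt'.
apply: lee_pmul.
- exact: nonincr_ge0_ge0.
- exact: inner_ge0 (lt_le_trans t0 tt').
- exact: nonincr_ge0_le.
- exact: inner_nonincr.
Qed.

Lemma inner_early xi t : 0 < t -> xi <= t -> inner xi t = (avg k t * int0 f xi)%E.
Proof.
move=> t0 xit; rewrite /inner /int0 -ge0_integralZl //; last 3 first.
- exact: nonincr_ge0_measurable.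
- by move=> u _; exact: nonincr_ge0_ge0.
- exact: avg_ge0.
apply: eq_integral => u; rewrite inE /= in_itv /= => /andP[_ uxi].
by rewrite max_r ?(le_trans uxi xit) // muleC.
Qed.

Lemma g_avg_int0_le r : 0 < r ->
  (g r * avg k r * int0 f r <= (r `^ (a + b - 1))%:E * D)%E.
Proof.
move=> r0; have int0_f0 := int0_ge0 hf r.
rewrite (_ : r `^ (a + b - 1) = r^-1 * r^-1 * r `^ (1 + a + b)); last first.
  by rewrite !powRD_gt0 // powRN powRr1 ?ltW //; field; rewrite lt0r_neq0.
have gk := lee_pmul_scaled (nonincr_ge0_ge0 hg r) (avg_ge0 hk r0) (le_avg hg r0) (lexx _).
rewrite muleC; apply: le_trans (lee_wpmul2l int0_f0 gk) _.
apply: (@le_trans _ _ ((r^-1 * r^-1)%:E * ((r `^ (1 + a + b))%:E * D))%E).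
  rewrite muleCA (muleA (int0 f r)).
  by apply: lee_wpmul2l; [rewrite lee_fin mulr_ge0 ?invr_ge0 ?ltW | exact: int0_prod_le].
by rewrite muleA -EFinM.
Qed.

Lemma g_inner_le_far sg xi t : exponent_split rho be b sg -> 0 < xi -> xi <= t ->
  (g t * inner xi t <= (C0 * avg_const C0 sg * (xi `^ a * t `^ (b - 1)))%:E * D)%E.
Proof.
move=> [sg0 sg1 sgrho ga0 gabe] xi0 xit; have t0 := lt_le_trans xi0 xit.
have gt := decays_le hg dg C0_ge0 ga0 gabe xi0 xit.
have kt := avg_decays hk dk C0_ge0 sg0 sg1 sgrho xi0 xit.
have gk := lee_pmul_scaled (nonincr_ge0_ge0 hg t) (avg_ge0 hk t0) gt kt.
rewrite inner_early // muleA; apply: le_trans (lee_wpmul2r (int0_ge0 hf xi) gk) _.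
rewrite -muleA; apply: le_trans (lee_wpmul2l _ (g_avg_int0_le xi0)) _.
  by rewrite lee_fin !mulr_ge0 ?powR_ge0 ?avg_const_ge0.
rewrite muleA -EFinM le_eqVlt; apply/predU1P; left; congr (_%:E * _)%E.
rewrite !powR_div // !opprB !(powRD_gt0 _ _ xi0) !(powRD_gt0 _ _ t0) !powRN !powRr1 ?ltW //.
by field; rewrite !lt0r_neq0 ?powR_gt0.
Qed.

Lemma inner_tail_le sg t xi : exponent_split rho al a sg -> 0 < t -> t <= xi ->
  (\int[leb]_(u in `]t, xi]) (f u * avg k (Num.max u t)) <=
    (C0 * avg_const C0 sg * t `^ (1 - a) * (xi `^ a / a))%:E * (f t * avg k t))%E.
Proof.
move=> [sg0 sg1 sgrho ga0 gaal] t0 txi; have xi0 := lt_le_trans t0 txi.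
have fk0 : (0 <= f t * avg k t)%E by rewrite mule_ge0 ?avg_ge0 //; exact: nonincr_ge0_ge0.
set c := C0 * avg_const C0 sg * t `^ (1 - a).
have c0 : 0 <= c by rewrite !mulr_ge0 ?powR_ge0 ?avg_const_ge0.
apply: (@le_trans _ _
    (\int[leb]_(u in `]t, xi]) (c%:E * (f t * avg k t) * (u `^ (a - 1))%:E))%E).
  apply: ge0_le_integral => //.
  - by move=> u _; exact: nonincr_ge0_ge0 (inner_integrand_nonincr t0) u.
  - by apply: nonincr_ge0_measurable; exact: inner_integrand_nonincr.
  - by apply: measurable_funeM; exact: measurable_funTS (measurable_powRE _).
  move=> u; rewrite /= in_itv /= => /andP[tu _]; have u0 := lt_trans t0 tu.
  have fu := decays_le hf df C0_ge0 ga0 gaal t0 (ltW tu).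
  have ku := avg_decays hk dk C0_ge0 sg0 sg1 sgrho t0 (ltW tu).
  rewrite max_l; last exact: ltW.
  apply: le_trans (lee_pmul_scaled (nonincr_ge0_ge0 hf u) (avg_ge0 hk u0) fu ku) _.
  rewrite muleAC -EFinM le_eqVlt; apply/predU1P; left; congr (_%:E * _)%E.
  rewrite /c !powR_div // !opprB !(powRD_gt0 _ _ t0) !(powRD_gt0 _ _ u0).
  rewrite !powRN !powRr1 ?ltW //.
  by field; rewrite !lt0r_neq0 ?powR_gt0.
rewrite ge0_integralZl //; last 3 first.
- exact: measurable_funTS (measurable_powRE _).
- by move=> u _; rewrite lee_fin powR_ge0.
- by rewrite mule_ge0 // lee_fin.
apply: le_trans (lee_wpmul2l _ (integral_powR_oc_le a_gt0 (ltW t0) xi0)) _.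
  by rewrite mule_ge0 // lee_fin.
by rewrite muleAC -EFinM.
Qed.

Lemma g_inner_le_near sg xi t : exponent_split rho al a sg -> 0 < t -> t <= xi ->
  (g t * inner xi t <=
    ((1 + C0 * avg_const C0 sg / a) * (xi `^ a * t `^ (b - 1)))%:E * D)%E.
Proof.
move=> sg_split t0 txi; have xi0 := lt_le_trans t0 txi.
have [_ sg1 _ _ _] := sg_split.
have g0 := nonincr_ge0_ge0 hg t; have gk0 := mule_ge0 g0 (avg_ge0 hk t0).
have gtk_le : (g t * avg k t * int0 f t <= (xi `^ a * t `^ (b - 1))%:E * D)%E.
  apply: le_trans (g_avg_int0_le t0) _; apply: lee_wpmul2r => //.
  rewrite lee_fin -addrA [t `^ (a + _)](powRD_gt0 _ _ t0) ler_wpM2r ?powR_ge0 //.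
  by apply: (ge0_ler_powR (ltW a_gt0)); rewrite // nnegrE ltW.
have gfk_le : (g t * (f t * avg k t) <= (t^-1 * t `^ (a + b - 1))%:E * D)%E.
  rewrite muleCA muleC; apply: le_trans (lee_wpmul2l gk0 (le_avg hf t0)) _.
  rewrite /avg muleCA EFinM.
  rewrite -[X in (_ <= X)%E]muleA.
  apply: lee_wpmul2l; first by rewrite lee_fin invr_ge0 ltW.
  exact: g_avg_int0_le.
have tail_le : (g t * \int[leb]_(u in `]t, xi]) (f u * avg k (Num.max u t)) <=
    (C0 * avg_const C0 sg / a * (xi `^ a * t `^ (b - 1)))%:E * D)%E.
  apply: le_trans (lee_wpmul2l g0 (inner_tail_le sg_split t0 txi)) _.
  rewrite muleCA; apply: le_trans (lee_wpmul2l _ gfk_le) _.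
    by rewrite lee_fin !mulr_ge0 ?divr_ge0 ?powR_ge0 ?avg_const_ge0 ?invr_ge0 // ltW.
  rewrite muleA -EFinM le_eqVlt; apply/predU1P; left; congr (_%:E * _)%E.
  rewrite !(powRD_gt0 _ _ t0) !powRN !powRr1 ?ltW //.
  by field; rewrite !lt0r_neq0 ?powR_gt0.
have -> : inner xi t = (inner t t + \int[leb]_(u in `]t, xi]) (f u * avg k (Num.max u t)))%E.
  by apply: (int0_split (inner_integrand_nonincr t0)) => //; exact: ltW.
rewrite (inner_early t0 (lexx t)) ge0_muleDr; last 2 first.
- by rewrite mule_ge0 ?avg_ge0 ?int0_ge0.
- by apply: integral_ge0 => u _; exact: nonincr_ge0_ge0 (inner_integrand_nonincr t0) u.
rewrite muleA; apply: le_trans (leeD gtk_le tail_le) _.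
rewrite -ge0_muleDl ?lee_fin ?mulr_ge0 ?powR_ge0 ?divr_ge0 ?avg_const_ge0 ?invr_ge0 //;
  last exact: ltW.
by rewrite -EFinD mulrDl mul1r.
Qed.

Definition inner_const (sa sb : R) :=
  1 + C0 * avg_const C0 sa / a + C0 * avg_const C0 sb.

Lemma integral_g_inner_le sa sb xi eta :
  exponent_split rho al a sa -> exponent_split rho be b sb -> 0 < b -> 0 < xi -> 0 < eta ->
  (\int[leb]_(t in `]0%R, eta]) (g t * inner xi t) <=
    (inner_const sa sb * (xi `^ a * (eta `^ b / b)))%:E * D)%E.
Proof.
move=> sa_split sb_split b0 xi0 eta0.
have [_ sa1 _ _ _] := sa_split; have [_ sb1 _ _ _] := sb_split.
have Ca0 := avg_const_ge0 C0_ge0 sa1; have Cb0 := avg_const_ge0 C0_ge0 sb1.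
have Cna0 : 0 <= 1 + C0 * avg_const C0 sa / a.
  by rewrite addr_ge0 // !mulr_ge0 // invr_ge0 ltW.
have Cf0 : 0 <= C0 * avg_const C0 sb by rewrite mulr_ge0.
set M := inner_const sa sb; have M0 : 0 <= M by rewrite addr_ge0.
apply: (@le_trans _ _ (\int[leb]_(t in `]0%R, eta])
    ((M * xi `^ a)%:E * D * (t `^ (b - 1))%:E))%E).
  apply: ge0_le_integral => //.
  - move=> t; rewrite /= in_itv /= => /andP[t0 _].
    by rewrite mule_ge0 ?inner_ge0 //; exact: nonincr_ge0_ge0.
  - exact: g_inner_measurable.
  - by apply: measurable_funeM; exact: measurable_funTS (measurable_powRE _).
  move=> t; rewrite /= in_itv /= => /andP[t0 _].
  have X0 : 0 <= xi `^ a * t `^ (b - 1) by rewrite mulr_ge0 ?powR_ge0.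
  rewrite muleAC -EFinM -mulrA.
  have [xit|txi] := leP xi t.
  - apply: le_trans (g_inner_le_far sb_split xi0 xit) _.
    by apply: lee_wpmul2r => //; rewrite lee_fin ler_wpM2r // /M /inner_const lerDr.
  - apply: le_trans (g_inner_le_near sa_split t0 (ltW txi)) _.
    by apply: lee_wpmul2r => //; rewrite lee_fin ler_wpM2r // /M /inner_const lerDl.
rewrite ge0_integralZl //; last 3 first.
- exact: measurable_funTS (measurable_powRE _).
- by move=> u _; rewrite lee_fin powR_ge0.
- by rewrite mule_ge0 // lee_fin mulr_ge0 ?powR_ge0.
rewrite muleAC; apply: lee_wpmul2r => //.
apply: le_trans (lee_wpmul2l _ (integral_powR_0c b0 eta0)) _.
  by rewrite lee_fin mulr_ge0 ?powR_ge0.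
by rewrite -EFinM mulrA.
Qed.

End inner_integral.

Lemma rearr_nonincr_ge0 n (u : n.-tuple R -> R) : nonincr_ge0 (rearr u).
Proof.
split=> [x|x y xy].
- by apply: le_ereal_inf_tmp => _ [s [s0 _] <-]; rewrite lee_fin.
- apply: ereal_inf_le_tmp => _ [s [s0 hs] <-]; exists s => //; split => //.
  by apply: le_trans hs _; rewrite lee_fin.
Qed.

Lemma le_ereal_sup_powR (F : R -> \bar R) (c r : R) : 0 < r ->
  (F r <= (r `^ c)%:E *
    ereal_sup [set (((t `^ c)^-1)%:E * F t)%E | t in [set t : R | (0 < t)%R]])%E.
Proof.
move=> r0; have rc0 : 0 < r `^ c := powR_gt0 c r0.
rewrite -[F r]mul1e -(mulfV (lt0r_neq0 rc0)) EFinM -muleA.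
apply: lee_wpmul2l; first by rewrite lee_fin ltW.
by apply: ereal_sup_ubound; exists r.
Qed.

Lemma conj_expV (q : R) : 1 < q -> (conj_exp q)^-1 = 1 - q^-1.
Proof.
by move=> q1; rewrite /conj_exp invf_div; field; rewrite lt0r_neq0 // (lt_trans ltr01).
Qed.

End rearrangement_estimate.

Theorem lemma3 (R : realType) (p q alpha beta rho C0 : R) :
  1 < p -> 1 < q -> 0 <= alpha -> 0 <= beta -> 0 <= rho -> 0 < C0 ->
  rho + alpha + p^-1 >= 1 -> rho + beta + (conj_exp q)^-1 >= 1 ->
  exists C : R,
  forall (n : nat) (mu nu K : n.-tuple R -> R),
    (0 < n)%N ->
    locally_integrable_n mu -> locally_integrable_n nu -> locally_integrable_n K ->
    (forall lam t : R, 1 <= lam -> 0 < t ->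
       (rearr mu (lam * t) <= (C0 / lam `^ alpha)%:E * rearr mu t)%E) ->
    (forall lam t : R, 1 <= lam -> 0 < t ->
       (rearr nu (lam * t) <= (C0 / lam `^ beta)%:E * rearr nu t)%E) ->
    (forall lam t : R, 1 <= lam -> 0 < t ->
       (rearr K (lam * t) <= (C0 / lam `^ rho)%:E * rearr K t)%E) ->
    let D := ereal_sup [set (((t `^ (2 + p^-1 - q^-1))^-1)%:E *
                 (rearr_int mu t * rearr_int nu t * rearr_int K t))%E
               | t in [set t : R | 0 < t]] in
    (D < +oo)%E ->
    forall xi eta : R, 0 < xi -> 0 < eta ->
      (((eta `^ (conj_exp q)^-1)^-1 * (xi `^ p^-1)^-1)%:E *
        \int[@lebesgue_measure R]_(t in `]0%R, eta])
          (rearr nu t *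
            \int[@lebesgue_measure R]_(s in `]0%R, xi])
              (rearr mu s * rearr2 K (Num.max s t)))
       <= C%:E * D)%E.
Proof.
move=> p1 q1 alpha0 beta0 rho0 C0_gt0 hra hrb.
have [p0 q0] : 0 < p /\ 0 < q by split; exact: lt_trans ltr01 _.
have bE := conj_expV q1.
have a_gt0 : 0 < p^-1 by rewrite invr_gt0.
have a_le1 : p^-1 <= 1 by rewrite invf_le1 // ltW.
have b_gt0 : 0 < (conj_exp q)^-1 by rewrite bE subr_gt0 invf_lt1.
have b_le1 : (conj_exp q)^-1 <= 1 by rewrite bE lerBlDr lerDl invr_ge0 ltW.
set a := p^-1 in a_gt0 a_le1 hra *; set b := (conj_exp q)^-1 in bE b_gt0 b_le1 hrb *.
have sa_split := exponent_split_min rho0 alpha0 a_gt0 a_le1 hra.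
have sb_split := exponent_split_min rho0 beta0 b_gt0 b_le1 hrb.
exists (inner_const C0 a (Num.min rho (1 - a)) (Num.min rho (1 - b)) / b).
move=> n mu nu K _ _ _ _ dmu dnu dK D _ xi eta xi0 eta0.
have hf := rearr_nonincr_ge0 mu; have hg := rearr_nonincr_ge0 nu.
have hk := rearr_nonincr_ge0 K.
have int0_prod_le r : 0 < r ->
    (int0 (rearr mu) r * int0 (rearr nu) r * int0 (rearr K) r <= (r `^ (1 + a + b))%:E * D)%E.
  move=> r0; rewrite -(_ : 2 + a - q^-1 = 1 + a + b); last by rewrite bE; ring.
  exact: le_ereal_sup_powR.
have D_ge0 : (0 <= D)%E.
  have := int0_prod_le 1 ltr01; rewrite powR1 mul1e; apply: le_trans.
  by rewrite !mule_ge0 ?int0_ge0.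
have := integral_g_inner_le hf hg hk dmu dnu dK (ltW C0_gt0) a_gt0 D_ge0 int0_prod_le
  sa_split sb_split b_gt0 xi0 eta0.
move/(lee_wpmul2l _)/le_trans; apply; first by rewrite lee_fin mulr_ge0 // invr_ge0 powR_ge0.
rewrite muleA -EFinM le_eqVlt; apply/predU1P; left; congr (_%:E * _)%E.
by field; rewrite !lt0r_neq0 ?powR_gt0.
Qed.
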